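(* Let $t\ge 2$ and $n_0=2^t-1$. There exists a spanning subgraph $H$ of $Q_{n_0}$ containing no subgraph isomorphic to $Q_2$, together with disjoint sets $C,D\subseteq\{0,1\}^{n_0}$, each of which is both an independent set and a dominating set of $H$, with $|C|=2^{n_0}/(n_0+1)$ and $|D|=3\cdot 2^{n_0}/(n_0+1)$, such that every edge of $H$ has at least one endpoint in $C\cup D$ and $e(H)\le 2^{n_0+1}$.
   Context: $Q_n$ is the hypercube on $\{0,1\}^n$ with edges between vertices differing in exactly one coordinate; $Q_2$ is the 4-cycle. A set $S$ is dominating in $H$ if every vertex of $H$ is in $S$ or adjacent in $H$ to a vertex of $S$; independent means no edge of $H$ has both endpoints in $S$. *)

From mathcomp Require Import all_boot.
Set Implicit Arguments. Unset Strict Implicit. Unset Printing Implicit Defensive.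

Definition cube (n : nat) := {ffun 'I_n -> bool}.

Definition qadj (n : nat) (x y : cube n) : bool :=
  #|[set i | x i != y i]| == 1.

(* A spanning subgraph H of Q_n is given by its edge set E, a set of
   unordered pairs {x,y} each of which is an edge of Q_n; its vertex set
   is all of {0,1}^n. *)
Definition subcube_edges (n : nat) (E : {set {set cube n}}) : Prop :=
  forall e, e \in E -> exists x y, qadj x y /\ e = [set x; y].

Definition hadj (n : nat) (E : {set {set cube n}}) (x y : cube n) : bool :=
  (x != y) && ([set x; y] \in E).

Definition Q2_free (n : nat) (E : {set {set cube n}}) : Prop :=
  forall a b c d : cube n,
    uniq [:: a; b; c; d] ->
    ~ [/\ hadj E a b, hadj E b c, hadj E c d & hadj E d a].

Definition independent (n : nat) (E : {set {set cube n}}) (S : {set cube n}) : Prop :=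
  forall x y, x \in S -> y \in S -> ~~ hadj E x y.

Definition dominating (n : nat) (E : {set {set cube n}}) (S : {set cube n}) : Prop :=
  forall v : cube n, v \in S \/ exists2 s, s \in S & hadj E v s.

From HB Require Import structures.
From mathcomp Require Import all_boot.
From Stdlib Require PeanoNat.
Set Implicit Arguments. Unset Strict Implicit. Unset Printing Implicit Defensive.

(* Label the coordinates of Q_n, n = 2^t - 1, by the nonzero t-bit words 1..n;
   the syndrome of v is the XOR of the labels of its 1-coordinates, so flipping
   a coordinate XORs its label into the syndrome.  Hence every syndrome value is
   one flip away from v and all 2^t syndrome classes have 2^n/(n+1) elements;
   C is class 0 (the Hamming code) and D is the union of classes 1, 2, 3.
   H joins v to the flip of v into class 0 when its syndrome s is nonzero and,
   when s > 3, also to the flip into class 1 or 3 according to the parity of s.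
   So every vertex issues at most two arcs, C and D are independent and
   dominating, and every edge meets a syndrome below 4.  A 4-cycle of Q_n flips
   coordinates i, j, i, j, so its syndromes have distinct opposite entries and
   an even sum; but the syndrome graph is a star at 0 together with stars at 1
   and 3 over the even, resp. odd, syndromes above 3, so each of its 4-cycles
   runs 0, a leaf, 1 or 3, a leaf of the same parity, and has an odd sum. *)

Lemma lxorA : associative Nat.lxor.
Proof. by move=> x y z; rewrite PeanoNat.Nat.lxor_assoc. Qed.

HB.instance Definition _ := Monoid.isComLaw.Build nat 0 Nat.lxor lxorA
  PeanoNat.Nat.lxor_comm PeanoNat.Nat.lxor_0_l.

Lemma lxorKl a b : Nat.lxor a (Nat.lxor a b) = b.
Proof. by rewrite lxorA PeanoNat.Nat.lxor_nilpotent PeanoNat.Nat.lxor_0_l. Qed.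

Lemma lxor_eq0 a b : (Nat.lxor a b == 0) = (a == b).
Proof.
by apply/eqP/eqP => [/PeanoNat.Nat.lxor_eq_0_iff | ->] //; apply: PeanoNat.Nat.lxor_nilpotent.
Qed.

Lemma lxor2_eq a b c : (Nat.lxor (Nat.lxor a b) c == a) = (b == c).
Proof.
rewrite -lxorA -[b == c]lxor_eq0; apply/eqP/eqP => [e | ->].
  by rewrite -(lxorKl a (Nat.lxor b c)) e PeanoNat.Nat.lxor_nilpotent.
by rewrite PeanoNat.Nat.lxor_0_r.
Qed.

Lemma Nat_oddE n : Nat.odd n = odd n.
Proof. by elim: n => // n IH; rewrite PeanoNat.Nat.odd_succ -PeanoNat.Nat.negb_odd IH. Qed.

Lemma odd_lxor a b : odd (Nat.lxor a b) = odd a (+) odd b.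
Proof.
rewrite -!Nat_oddE -!PeanoNat.Nat.bit0_odd PeanoNat.Nat.lxor_spec.
by case: (Nat.testbit a 0); case: (Nat.testbit b 0).
Qed.

Lemma expn_pow a b : a ^ b = PeanoNat.Nat.pow a b.
Proof. by elim: b => //= b IH; rewrite expnS IH. Qed.

Lemma lxor_ltn_pow2 t a b : a < 2 ^ t -> b < 2 ^ t -> Nat.lxor a b < 2 ^ t.
Proof.
have shiftrP c : reflect (Nat.shiftr c t = 0) (c < 2 ^ t).
  have pow_neq0 : PeanoNat.Nat.pow 2 t <> 0 by apply: PeanoNat.Nat.pow_nonzero.
  have := PeanoNat.Nat.div_small_iff c _ pow_neq0.
  rewrite PeanoNat.Nat.shiftr_div_pow2 expn_pow => -[small_div div_small].
  by apply: (iffP ltP).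
by move=> /shiftrP a_t /shiftrP b_t; apply/shiftrP; rewrite PeanoNat.Nat.shiftr_lxor a_t b_t.
Qed.

Section Flip.
Variable n : nat.
Implicit Types (v w : cube n) (i j k l : 'I_n).

Definition flip v k : cube n := [ffun i => v i (+) (i == k)].

Lemma flipK k : involutive (flip^~ k).
Proof. by move=> v; apply/ffunP=> i; rewrite !ffunE -addbA addbb addbF. Qed.

Lemma flip_neq v k : flip v k != v.
Proof. by apply/eqP=> /ffunP /(_ k); rewrite ffunE eqxx addbT; case: (v k). Qed.

Lemma flip_cycle4 v i j k l :
  flip (flip (flip (flip v i) j) k) l = v -> i != j -> j != k -> k = i.
Proof.
move=> /ffunP cyc ij jk; have := cyc i; have := cyc j; rewrite !ffunE.
rewrite !eqxx (eq_sym j i) (negbTE ij) (negbTE jk) !addbF.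
case: (j =P l) => [<- _ | _]; last by case: (v j).
rewrite (negbTE ij) addbF.
by case: (i =P k) => [-> | _]; last case: (v i).
Qed.

Lemma qadjC : symmetric (@qadj n).
Proof.
by move=> v w; rewrite /qadj; congr (_ == 1); apply: eq_card => i; rewrite !inE eq_sym.
Qed.

Lemma qadj_flip v k : qadj v (flip v k).
Proof.
rewrite /qadj (_ : [set i | v i != flip v k i] = [set k]) ?cards1 //.
by apply/setP=> i; rewrite !inE ffunE; case: (v i); case: (i == k).
Qed.

Lemma qadjP v w : reflect (exists k, w = flip v k) (qadj v w).
Proof.
apply: (iffP cards1P) => [[k /setP diff_k] | [k ->]]; last exact/cards1P/qadj_flip.
exists k; apply/ffunP=> i; move: (diff_k i); rewrite !inE ffunE => <-.
by case: (v i); case: (w i).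
Qed.

Lemma qadj_neq v w : qadj v w -> v != w.
Proof. by move=> /qadjP[k ->]; rewrite eq_sym flip_neq. Qed.

Definition syndrome v : nat := \big[Nat.lxor/0]_(i < n | v i) i.+1.

Lemma syndrome_flip v k : syndrome (flip v k) = Nat.lxor (syndrome v) k.+1.
Proof.
rewrite /syndrome [LHS]big_mkcond [in RHS]big_mkcond /=.
rewrite (bigD1 k) //= [in RHS](bigD1 k) //= ffunE eqxx addbT.
rewrite (eq_bigr (fun i => if v i then i.+1 else 0)); last first.
  by move=> i /negbTE i_k; rewrite ffunE i_k addbF.
rewrite -lxorA [Nat.lxor _ k.+1]PeanoNat.Nat.lxor_comm lxorA; congr Nat.lxor.
by case: (v k); rewrite ?PeanoNat.Nat.lxor_nilpotent ?PeanoNat.Nat.lxor_0_l.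
Qed.

End Flip.

Definition low_partner (s : nat) : nat := if odd s then 3 else 1.

Definition syn_arc (s s' : nat) : bool :=
  ((s != 0) && (s' == 0)) || ((3 < s) && (s' == low_partner s)).

Definition syn_adj (s s' : nat) : bool := syn_arc s s' || syn_arc s' s.

Lemma low_partner_le3 s : low_partner s <= 3.
Proof. by rewrite /low_partner; case: (odd s). Qed.

Lemma odd_low_partner s : odd (low_partner s).
Proof. by rewrite /low_partner; case: (odd s). Qed.

Lemma low_partner_odd s s' : low_partner s = low_partner s' -> odd s = odd s'.
Proof. by rewrite /low_partner; case: (odd s); case: (odd s'). Qed.

Lemma syn_adjC : symmetric syn_adj.
Proof. by move=> s s'; rewrite /syn_adj orbC. Qed.

Lemma syn_adj0 s : syn_adj 0 s = (s != 0).
Proof.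
have lp_neq0 : low_partner s != 0 by rewrite /low_partner; case: (odd s).
by rewrite /syn_adj /syn_arc /= eqxx andbT (eq_sym 0) (negbTE lp_neq0) andbF orbF.
Qed.

Lemma syn_adj_cover s s' : syn_adj s s' -> (s < 4) || (s' < 4).
Proof.
by case/orP=> /orP[] /andP[_ /eqP ->]; rewrite ?ltnS ?low_partner_le3 ?orbT.
Qed.

Lemma syn_adj_low s s' : 0 < s < 4 -> 0 < s' < 4 -> ~~ syn_adj s s'.
Proof. by case: s => [|[|[|[|s]]]] //; case: s' => [|[|[|[|s']]]]. Qed.

Lemma syn_adj_nonzero_nbrs x y z : x != 0 -> y != 0 -> z != 0 -> y != z ->
  syn_adj x y -> syn_adj x z -> [/\ 3 < y, 3 < z & x = low_partner y].
Proof.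
rewrite /syn_adj /syn_arc => /negbTE -> /negbTE -> /negbTE -> yz /=.
case/orP=> /andP[y_gt3 /eqP x_y]; case/orP=> /andP[z_gt3 /eqP x_z].
- by rewrite x_y x_z eqxx in yz.
- by move: (low_partner_le3 z); rewrite -x_z leqNgt y_gt3.
- by move: (low_partner_le3 y); rewrite -x_y leqNgt z_gt3.
- by [].
Qed.

Lemma syn_adj_C4_odd s0 s1 s2 s3 :
  syn_adj s0 s1 -> syn_adj s1 s2 -> syn_adj s2 s3 -> syn_adj s3 s0 ->
  s0 != s2 -> s1 != s3 -> odd (s0 + s1 + s2 + s3).
Proof.
have C4_through0 a b c : syn_adj 0 a -> syn_adj a b -> syn_adj b c -> syn_adj c 0 ->
    b != 0 -> a != c -> odd a (+) odd b (+) odd c.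
  rewrite syn_adj0 syn_adjC => a_neq0 ba bc; rewrite syn_adjC syn_adj0 => c_neq0 b_neq0 ac.
  have [_ _ b_a] := syn_adj_nonzero_nbrs b_neq0 a_neq0 c_neq0 ac ba bc.
  have ca : c != a by rewrite eq_sym.
  have [_ _ b_c] := syn_adj_nonzero_nbrs b_neq0 c_neq0 a_neq0 ca bc ba.
  by rewrite b_a odd_low_partner (low_partner_odd (etrans (esym b_a) b_c)); case: (odd c).
move=> a01 a12 a23 a30 s02 s13; rewrite !oddD.
have [s0_0 | s0_neq0] := eqVneq s0 0.
  by subst s0; rewrite addFb; apply: C4_through0; rewrite // eq_sym.
have [s1_0 | s1_neq0] := eqVneq s1 0.
  subst s1; move: (C4_through0 s2 s3 s0 a12 a23 a30 a01).
  rewrite eq_sym [s2 == _]eq_sym => /(_ s13 s02).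
  by case: (odd s0); case: (odd s2); case: (odd s3).
have [s2_0 | s2_neq0] := eqVneq s2 0.
  subst s2; move: (C4_through0 s3 s0 s1 a23 a30 a01 a12 s0_neq0).
  rewrite eq_sym => /(_ s13).
  by case: (odd s0); case: (odd s1); case: (odd s3).
have [s3_0 | s3_neq0] := eqVneq s3 0.
  subst s3; move: (C4_through0 s0 s1 s2 a30 a01 a12 a23 s1_neq0 s02).
  by case: (odd s0); case: (odd s1); case: (odd s2).
(* Without a zero syndrome, s2 would be both a leaf (above 3) and a centre. *)
rewrite syn_adjC in a01.
have [_ s2_gt3 _] := syn_adj_nonzero_nbrs s1_neq0 s0_neq0 s2_neq0 s02 a01 a12.
rewrite syn_adjC in a12.
have [_ _ s2_low] := syn_adj_nonzero_nbrs s2_neq0 s1_neq0 s3_neq0 s13 a12 a23.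
by move: (low_partner_le3 s1); rewrite -s2_low leqNgt s2_gt3.
Qed.

Lemma syn_arc_inj s s1 s2 :
  syn_arc s s1 -> syn_arc s s2 -> (s1 == 0) = (s2 == 0) -> s1 = s2.
Proof.
have lp_neq0 : low_partner s != 0 by rewrite /low_partner; case: (odd s).
by case/orP=> /andP[_ /eqP ->] /orP[] /andP[_ /eqP ->]; rewrite ?eqxx ?(negbTE lp_neq0).
Qed.

Lemma syn_adj_low_dominating s : ~~ (0 < s < 4) -> exists2 s', 0 < s' < 4 & syn_adj s s'.
Proof.
have [-> _ | s_neq0] := eqVneq s 0; first by exists 1.
rewrite lt0n s_neq0 -leqNgt => s_gt3; exists (low_partner s).
  by rewrite ltnS low_partner_le3 andbT /low_partner; case: (odd s).
by rewrite /syn_adj /syn_arc s_gt3 eqxx orbT.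
Qed.

Section HammingGraph.
Variable n : nat.
Implicit Types (v x y : cube n) (S : pred nat).

Definition hamming_arcs : {set cube n * cube n} :=
  [set p | qadj p.1 p.2 && syn_arc (syndrome p.1) (syndrome p.2)].

Definition hamming_graph : {set {set cube n}} :=
  [set [set p.1; p.2] | p in hamming_arcs].

Lemma hamming_subcube_edges : subcube_edges hamming_graph.
Proof. by move=> e /imsetP[[x y] + ->]; rewrite inE => /andP[xy _]; exists x, y. Qed.

Lemma hadj_hamming x y :
  hadj hamming_graph x y = qadj x y && syn_adj (syndrome x) (syndrome y).
Proof.
apply/andP/andP => [[x_neq_y /imsetP[[a b]]] | [xy /orP[] arc]].
- rewrite inE /= => /andP[ab arc] e.
  have: y \in [set a; b] by rewrite -e set22.
  have: x \in [set a; b] by rewrite -e set21.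
  rewrite !inE => /orP[] /eqP ? /orP[] /eqP ?; subst; rewrite ?eqxx // in x_neq_y.
    by rewrite /syn_adj arc.
  by rewrite qadjC /syn_adj arc orbT.
- split; first exact: qadj_neq.
  by apply/imsetP; exists (x, y); rewrite // inE xy arc.
- split; first exact: qadj_neq.
  by apply/imsetP; exists (y, x); rewrite /= 1?setUC // inE qadjC xy arc.
Qed.

Lemma hamming_Q2_free : Q2_free hamming_graph.
Proof.
move=> a b c d + []; rewrite !hadj_hamming.
move=> + /andP[/qadjP[i b_def] adj01] /andP[/qadjP[j c_def] adj12]
  /andP[/qadjP[k d_def] adj23] /andP[/qadjP[l /esym cycle] adj30].
subst b c d; rewrite /= !inE !negb_or => /and3P[/and3P[_ a_c _] /andP[_ b_d] _].
have ij : i != j by apply: contra a_c => /eqP<-; rewrite flipK.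
have jk : j != k by apply: contra b_d => /eqP<-; rewrite flipK.
have ki := flip_cycle4 cycle ij jk; subst k.
have := syn_adj_C4_odd adj01 adj12 adj23 adj30; rewrite !syndrome_flip.
rewrite eq_sym lxor2_eq eqSS (negbTE (ij : i != j :> nat)).
rewrite eq_sym lxor2_eq eqSS (negbTE (jk : j != i :> nat)).
move=> /(_ isT isT); rewrite !oddD !odd_lxor.
by case: (odd (syndrome a)); case: (odd i.+1); case: (odd j.+1).
Qed.

Lemma independent_syndrome S :
  (forall s s', S s -> S s' -> ~~ syn_adj s s') ->
  independent hamming_graph [set v | S (syndrome v)].
Proof.
by move=> S_indep x y; rewrite !inE hadj_hamming => Sx Sy; rewrite negb_and S_indep ?orbT.
Qed.

Lemma hamming_cover x y :
  hadj hamming_graph x y -> (syndrome x < 4) || (syndrome y < 4).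
Proof. by rewrite hadj_hamming => /andP[_ /syn_adj_cover]. Qed.

Lemma card_hamming_graph : #|hamming_graph| <= 2 ^ n.+1.
Proof.
apply: leq_trans (leq_imset_card _ _) _.
have arc_inj : {in hamming_arcs &,
    injective (fun p : cube n * cube n => (p.1, syndrome p.2 == 0))}.
  move=> [x y] [x' y']; rewrite !inE /=.
  move=> /andP[/qadjP[k ->] arc] /andP[/qadjP[k' ->] arc'] [x_x']; subst x'.
  move=> /(syn_arc_inj arc arc'); rewrite !syndrome_flip.
  by move=> /(congr1 (Nat.lxor (syndrome x))); rewrite !lxorKl => -[/ord_inj ->].
apply: leq_trans (leq_card_in _ _ arc_inj) _.
by rewrite card_prod card_ffun card_bool card_ord expnSr.
Qed.

End HammingGraph.

Section PerfectCode.
Variables t n : nat.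
Hypothesis n_eq : n.+1 = 2 ^ t.
Implicit Types (v : cube n) (S : pred nat).

Lemma syndrome_lt v : syndrome v < 2 ^ t.
Proof.
apply: (big_ind (fun s => s < 2 ^ t)); [by rewrite expn_gt0 | exact: lxor_ltn_pow2 |].
by move=> i _; rewrite -n_eq ltnS.
Qed.

Lemma coord_exists s : 0 < s < 2 ^ t -> exists k : 'I_n, k.+1 = s.
Proof.
case/andP=> s_gt0 s_lt; have k_lt : s.-1 < n by rewrite -ltnS prednK // n_eq.
by exists (Ordinal k_lt); rewrite /= prednK.
Qed.

Lemma syndrome_flip_to v s :
  s < 2 ^ t -> s != syndrome v -> exists k, syndrome (flip v k) = s.
Proof.
move=> s_lt s_neq; have [|k kE] := @coord_exists (Nat.lxor (syndrome v) s).
  by rewrite lt0n lxor_eq0 eq_sym s_neq lxor_ltn_pow2 ?syndrome_lt.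
by exists k; rewrite syndrome_flip kE lxorKl.
Qed.

Lemma dominating_syndrome S :
  (forall s, S s -> s < 2 ^ t) ->
  (forall s, s < 2 ^ t -> ~~ S s -> exists2 s', S s' & syn_adj s s') ->
  dominating (hamming_graph n) [set v : cube n | S (syndrome v)].
Proof.
move=> S_lt S_dom v; rewrite inE; case Sv: (S (syndrome v)); [by left | right].
have [s' Ss' adj] := S_dom _ (syndrome_lt v) (negbT Sv).
have s'_neq : s' != syndrome v by apply: contraTneq Ss' => ->; rewrite Sv.
have [k sk] := syndrome_flip_to (S_lt _ Ss') s'_neq.
by exists (flip v k); rewrite ?inE ?hadj_hamming ?qadj_flip sk.
Qed.

Lemma card_syndrome_eq s : s < 2 ^ t ->
  #|[set v : cube n | syndrome v == s]| = #|[set v : cube n | syndrome v == 0]|.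
Proof.
have [-> // | s_neq0 s_lt] := eqVneq s 0.
have [|k kE] := coord_exists (s := s); first by rewrite lt0n s_neq0.
rewrite -[RHS](card_preimset _ (can_inj (flipK k))); apply: eq_card => v.
by rewrite !inE syndrome_flip lxor_eq0 kE.
Qed.

Lemma card_syndrome_range m d : m + d <= 2 ^ t ->
  #|[set v : cube n | m <= syndrome v < m + d]| = d * #|[set v : cube n | syndrome v == 0]|.
Proof.
elim: d => [|d IH] lt_md.
  by rewrite mul0n; apply: eq_card0 => v; rewrite !inE addn0 ltnNge andbN.
rewrite addnS in lt_md *.
have -> : [set v : cube n | m <= syndrome v < (m + d).+1] =
    [set v : cube n | syndrome v == m + d] :|: [set v : cube n | m <= syndrome v < m + d].
  apply/setP=> v; rewrite !inE ltnS [syndrome v <= _]leq_eqVlt andb_orr.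
  by case: (syndrome v =P m + d) => [-> | _]; rewrite ?leq_addr ?andbF.
rewrite cardsU IH ?(ltnW lt_md) // card_syndrome_eq // mulSn.
rewrite (_ : _ :&: _ = set0) ?cards0 ?subn0 //.
by apply/setP=> v; rewrite !inE; case: eqP => // ->; rewrite ltnn andbF.
Qed.

Lemma card_cube_syndrome0 : 2 ^ n = n.+1 * #|[set v : cube n | syndrome v == 0]|.
Proof.
rewrite n_eq -(card_syndrome_range (m := 0) (leqnn _)).
rewrite (_ : [set v | _] = setT) ?cardsT ?card_ffun ?card_bool ?card_ord //.
by apply/setP=> v; rewrite !inE syndrome_lt.
Qed.

Lemma card_syndrome0 : #|[set v : cube n | syndrome v == 0]| = 2 ^ n %/ n.+1.
Proof. by rewrite card_cube_syndrome0 mulKn. Qed.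

Hypothesis t_gt1 : 1 < t.

Lemma four_leq_pow2 : 4 <= 2 ^ t.
Proof. by rewrite (_ : 4 = 2 ^ 2) // leq_exp2l. Qed.

Lemma card_syndrome_low : #|[set v : cube n | 0 < syndrome v < 4]| = 3 * 2 ^ n %/ n.+1.
Proof.
rewrite (card_syndrome_range (m := 1) (d := 3) four_leq_pow2).
by rewrite card_cube_syndrome0 mulnCA mulKn.
Qed.

End PerfectCode.

Theorem mainTheorem10 (t : nat) (ht : 2 <= t) :
  exists (E : {set {set cube (2 ^ t).-1}}) (C D : {set cube (2 ^ t).-1}),
    [/\ subcube_edges E /\ Q2_free E,
        [disjoint C & D],
        (independent E C /\ dominating E C) /\ (independent E D /\ dominating E D),
        #|C| = 2 ^ (2 ^ t).-1 %/ ((2 ^ t).-1).+1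
        /\ #|D| = (3 * 2 ^ (2 ^ t).-1) %/ ((2 ^ t).-1).+1 &
        (forall x y, hadj E x y -> (x \in C :|: D) || (y \in C :|: D))
        /\ #|E| <= 2 ^ ((2 ^ t).-1).+1].
Proof.
set n := (2 ^ t).-1.
have n_eq : n.+1 = 2 ^ t by rewrite prednK ?expn_gt0.
exists (hamming_graph n), [set v | syndrome v == 0], [set v | 0 < syndrome v < 4].
split.
- exact: conj (@hamming_subcube_edges n) (@hamming_Q2_free n).
- by rewrite -setI_eq0; apply/eqP/setP=> v; rewrite !inE; case: eqP => // ->.
- split; split.
  + by apply: (independent_syndrome (S := fun s => s == 0)) => s s' /eqP-> /eqP->.
  + apply: (dominating_syndrome (S := fun s => s == 0) n_eq) => [s /eqP-> | s _ s_neq0].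
      by rewrite expn_gt0.
    by exists 0; rewrite // syn_adjC syn_adj0.
  + exact: (independent_syndrome (S := fun s => 0 < s < 4)) syn_adj_low.
  + apply: (dominating_syndrome (S := fun s => 0 < s < 4) n_eq) => [s /andP[_ s_lt4] | s _].
      exact: leq_trans s_lt4 (four_leq_pow2 ht).
    exact: syn_adj_low_dominating.
- exact: conj (card_syndrome0 n_eq) (card_syndrome_low n_eq ht).
- split; last exact: card_hamming_graph.
  have in_CD s : s < 4 -> (s == 0) || (0 < s < 4) by case: s.
  by move=> x y /hamming_cover /orP[] /in_CD; rewrite !inE => ->; rewrite ?orbT.
Qed.
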